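(* Let $\mathbb{L}$ be a $\sigma$-complete orthomodular lattice and let $\mathcal{S}_b(\mathbb{L})$ be the set of bounded spectral families in $\mathbb{L}$. Then the map $E\mapsto f_E$ from $\mathcal{S}_b(\mathbb{L})$ to the set of functions $\mathcal{Q}(\mathbb{L})\to\mathbb{R}$, where $f_E(\mathfrak{B}):=\inf\{\lambda\in\mathbb{R}\mid E_\lambda\in\mathfrak{B}\}$, is injective.
   Context: A spectral family in a $\sigma$-complete lattice $\mathbb{L}$ (with $0$ and $1$) is a map $E:\mathbb{R}\to\mathbb{L}$, $\lambda\mapsto E_\lambda$, with (1) $E_\lambda\le E_\mu$ for $\lambda\le\mu$; (2) $E_\lambda=\bigwedge_{\mu>\lambda}E_\mu$; (3) $\bigwedge_\lambda E_\lambda=0$, $\bigvee_\lambda E_\lambda=1$ (infima/suprema over real index sets may be computed along the rationals). $E$ is bounded if there are $a\le b$ with $E_\lambda=0$ for $\lambda<a$ and $E_\lambda=1$ for $\lambda\ge b$. A dual ideal of $\mathbb{L}$ is a nonempty subset $\mathcal{J}$ with $0\notin\mathcal{J}$, upward closed, and closed under finite meets; a quasipoint is a maximal dual ideal. The Stone spectrum $\mathcal{Q}(\mathbb{L})$ is the set of quasipoints with the topology having as base the sets $\mathcal{Q}_a(\mathbb{L})=\{\mathfrak{B}\in\mathcal{Q}(\mathbb{L})\mid a\in\mathfrak{B}\}$, $a\in\mathbb{L}$. *)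

From HB Require Import structures.
From mathcomp Require Import all_boot all_order all_algebra.
From mathcomp Require Import boolp classical_sets reals Rstruct.
From Stdlib Require Import Rdefinitions.
Set Implicit Arguments. Unset Strict Implicit. Unset Printing Implicit Defensive.
Import Order.TTheory GRing.Theory Num.Theory.
Local Open Scope classical_set_scope.
Local Open Scope ring_scope.

Section Lat.
Context {disp : Order.disp_t} {L : tbLatticeType disp}.

Definition is_glb (S : set L) (x : L) : Prop :=
  (forall y, S y -> (x <= y)%O) /\ (forall z, (forall y, S y -> (z <= y)%O) -> (z <= x)%O).
Definition is_lub (S : set L) (x : L) : Prop :=
  (forall y, S y -> (y <= x)%O) /\ (forall z, (forall y, S y -> (y <= z)%O) -> (x <= z)%O).

Definition sigma_complete : Prop :=
  forall a : nat -> L, (exists x, is_glb (range a) x) /\ (exists x, is_lub (range a) x).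

Definition orthocomplementation (orth : L -> L) : Prop :=
  [/\ forall a, orth (orth a) = a,
      forall a b, (a <= b)%O -> (orth b <= orth a)%O,
      forall a, Order.meet a (orth a) = \bot%O &
      forall a, Order.join a (orth a) = \top%O].

Definition orthomodular (orth : L -> L) : Prop :=
  forall a b, (a <= b)%O -> b = Order.join a (Order.meet b (orth a)).

Definition orthomodular_lattice (orth : L -> L) : Prop :=
  orthocomplementation orth /\ orthomodular orth.

Definition spectral_family (E : R -> L) : Prop :=
  [/\ forall l m : R, l <= m -> (E l <= E m)%O,
      forall l : R, is_glb [set E m | m in [set m : R | l < m]] (E l),
      is_glb (range E) \bot%O &
      is_lub (range E) \top%O].

Definition bounded_spectral_family (E : R -> L) : Prop :=
  spectral_family E /\
  exists a b : R, a <= b /\ (forall l, l < a -> E l = \bot%O) /\ (forall l, b <= l -> E l = \top%O).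

Definition dual_ideal (J : set L) : Prop :=
  [/\ J !=set0, ~ J \bot%O,
      forall a b, J a -> (a <= b)%O -> J b &
      forall a b, J a -> J b -> J (Order.meet a b)].

Definition quasipoint (B : set L) : Prop :=
  dual_ideal B /\ forall J, dual_ideal J -> B `<=` J -> J = B.

Definition stone_spectrum : Type := {B : set L | quasipoint B}.

Definition f_of (E : R -> L) (B : stone_spectrum) : R :=
  inf [set l : R | (proj1_sig B) (E l)].

End Lat.

(** Suppose f_E = f_F but E_l is not below F_l.  Right continuity of F gives
    mu > l with E_l not below F_mu, and by orthomodularity
    a := E_l /\ (E_l /\ F_mu)^perp is nonzero.  A quasipoint B containing a
    contains E_l, so f_F(B) = f_E(B) <= l < mu, whence F_mu, and therefore
    E_l /\ F_mu, lies in B; but this element is orthogonal to a, so B would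
    contain 0.  The argument never uses sigma-completeness. *)
From HB Require Import structures.
From mathcomp Require Import all_boot all_order all_algebra.
From mathcomp Require Import boolp classical_sets reals Rstruct.
From Stdlib Require Import Rdefinitions.
Set Implicit Arguments. Unset Strict Implicit. Unset Printing Implicit Defensive.
Import Order.TTheory GRing.Theory Num.Theory.
Local Open Scope classical_set_scope.
Local Open Scope ring_scope.

Section StoneSpectrum.
Context {disp : Order.disp_t} {L : tbLatticeType disp}.

Lemma dual_ideal_principal (a : L) : a != \bot%O -> dual_ideal [set y | (a <= y)%O].
Proof.
move=> a_neq0; split.
- by exists a => /=.
- by rewrite /= lex0; apply/negP.
- by move=> u v /= au uv; apply: le_trans uv.
- by move=> u v /= au av; rewrite lexI au av.
Qed.

Lemma dual_ideal_bigcup (F : set (set L)) :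
  F !=set0 -> (forall X, F X -> dual_ideal X) -> total_on F subset ->
  dual_ideal (\bigcup_(X in F) X).
Proof.
move=> [X FX] Fdual Ftot; have [[x Xx] _ _ _] := Fdual X FX; split.
- by exists x, X.
- by move=> [Y /Fdual[]].
- move=> u v [Y FY Yu] uv; have [_ _ Yup _] := Fdual Y FY.
  by exists Y => //; apply: Yup uv.
- move=> u v [Y FY Yu] [Z FZ Zv].
  have [YZ|ZY] := Ftot Y Z FY FZ.
  + have [_ _ _ ZI] := Fdual Z FZ.
    by exists Z => //; apply: ZI => //; apply: YZ.
  + have [_ _ _ YI] := Fdual Y FY.
    by exists Y => //; apply: YI => //; apply: ZY.
Qed.

Lemma dual_ideal_sub_quasipoint (J : set L) :
  dual_ideal J -> exists B : stone_spectrum (L := L), J `<=` proj1_sig B.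
Proof.
move=> Jdual.
pose T := {X : set L | dual_ideal X /\ J `<=` X}.
have [[M [Mdual JM]] Mmax] : exists M : T, forall N : T,
    `[< proj1_sig M `<=` proj1_sig N >] -> N = M.
  apply: Zorn.
  - by move=> M; apply/asboolP.
  - by move=> M N P /asboolP MN /asboolP NP; apply/asboolP/(subset_trans MN).
  - by move=> [M ?] [N ?] /asboolP MN /asboolP NM; apply: eq_exist; apply/seteqP.
  move=> A Atot; have [->|/set0P[M0 AM0]] := eqVneq A set0.
    by exists (exist _ J (conj Jdual (@subset_refl _ J))).
  pose U := \bigcup_(X in @proj1_sig _ _ @` A) X.
  have Udual : dual_ideal U.
    apply: dual_ideal_bigcup; first by exists (proj1_sig M0), M0.
      by move=> _ [M _ <-]; case: (proj2_sig M).
    move=> _ _ [M AM <-] [N AN <-].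
    by have [] := Atot M N AM AN => /asboolP; [left | right].
  have JU : J `<=` U.
    by move=> x Jx; exists (proj1_sig M0); [exists M0 | case: (proj2_sig M0) => _; apply].
  exists (exist _ U (conj Udual JU)) => M AM; apply/asboolP => /= x Mx.
  by exists (proj1_sig M) => //; exists M.
have Mqp : quasipoint M.
  split=> // K Kdual MK.
  pose K' : T := exist _ K (conj Kdual (subset_trans JM MK)).
  by have /(congr1 (@proj1_sig _ _)) := Mmax K' (asboolT MK).
by exists (exist _ M Mqp).
Qed.

Lemma quasipoint_exists (a : L) :
  a != \bot%O -> exists B : stone_spectrum (L := L), proj1_sig B a.
Proof.
move=> /dual_ideal_principal /dual_ideal_sub_quasipoint [B aB].
by exists B; apply: aB => /=.
Qed.

Lemma orthomodular_meet_orth_neq0 (orth : L -> L) :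
  orthomodular_lattice orth ->
  forall x y : L, ~~ (x <= y)%O -> Order.meet x (orth (Order.meet x y)) != \bot%O.
Proof.
move=> [_ om] x y; apply: contraNN => /eqP xc_eq0.
by rewrite (om _ _ (leIl x y)) xc_eq0 joinx0 leIr.
Qed.

Lemma spectral_family_nle_gt (F : R -> L) (x : L) (l : R) :
  spectral_family F -> ~ (x <= F l)%O -> exists2 mu, l < mu & ~~ (x <= F mu)%O.
Proof.
move=> [_ Fglb _ _] xFl; apply: contrapT => nmu; apply: xFl.
apply: (Fglb l).2 => _ [mu /= lmu <-].
by apply: contrapT => /negP xFmu; apply: nmu; exists mu.
Qed.

Section SpectralFunction.
Variables (E : R -> L) (B : stone_spectrum (L := L)).
Hypothesis E_bounded : bounded_spectral_family E.

Lemma f_of_le (l : R) : proj1_sig B (E l) -> f_of E B <= l.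
Proof.
have [[_ B_neq0 _ _] _] := proj2_sig B; case: E_bounded => _ [a [_ [_ [Ebot _]]]].
move=> BEl; apply: ge_inf => //; exists a => x /= BEx.
by rewrite leNgt; apply/negP => xa; apply: B_neq0; rewrite -(Ebot x xa).
Qed.

Lemma f_of_lt_mem (l : R) : f_of E B < l -> proj1_sig B (E l).
Proof.
have [[[x Bx] _ Bup _] _] := proj2_sig B.
case: E_bounded => [[Emono _ _ _] [_ [b [_ [_ Etop]]]]] fl.
have BEb : proj1_sig B (E b) by rewrite Etop //; apply: Bup Bx (lex1 x).
have [m /= BEm ml] := inf_lt (ex_intro _ b BEb) fl.
by apply: Bup BEm _; apply/Emono/ltW.
Qed.

End SpectralFunction.

Lemma f_of_eq_le (orth : L -> L) (E F : R -> L) :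
  orthomodular_lattice orth ->
  bounded_spectral_family E -> bounded_spectral_family F ->
  f_of E = f_of F -> forall l, (E l <= F l)%O.
Proof.
move=> orthL HE HF EF l; apply: contrapT => nEF.
have [mu lmu nEFmu] := spectral_family_nle_gt HF.1 nEF.
pose c := Order.meet (E l) (F mu).
pose a := Order.meet (E l) (orth c).
have [B Ba] := quasipoint_exists (orthomodular_meet_orth_neq0 orthL nEFmu).
have [[_ B_neq0 Bup BI] _] := proj2_sig B.
have BEl : proj1_sig B (E l) by apply: Bup Ba (leIl _ _).
have BFmu : proj1_sig B (F mu).
  by apply: (f_of_lt_mem HF); rewrite -EF; apply: le_lt_trans (f_of_le HE BEl) lmu.
have ac_eq0 : Order.meet a c = \bot%O.
  case: orthL => -[_ _ orthI _] _; apply/eqP; rewrite -lex0 -(orthI c).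
  by rewrite lexI leIr /=; exact: le_trans (leIl _ _) (leIr _ _).
by apply: B_neq0; rewrite -ac_eq0; apply: BI Ba (BI _ _ BEl BFmu).
Qed.

End StoneSpectrum.

Theorem proposition2p7 (disp : Order.disp_t) (L : tbLatticeType disp) (orth : L -> L)
  (Horth : orthomodular_lattice orth) (Hsig : sigma_complete (L := L))
  (E F : R -> L) (HE : bounded_spectral_family E) (HF : bounded_spectral_family F) :
  f_of E = f_of F -> E = F.
Proof.
move=> EF; apply: funext => l; apply/le_anti.
by rewrite (f_of_eq_le Horth HE HF EF) (f_of_eq_le Horth HF HE (esym EF)).
Qed.
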